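(* Let $\mathfrak h\subseteq\Phi^+$ be a Hessenberg set, let $w,v\in W$ with $v$ a cover of $w$, $v=s_\alpha w$, and suppose $\alpha\in\Delta$ is a simple root. If $\alpha\in N^{\mathfrak h}_v$, then $N^{\mathfrak h}_v=\{\alpha\}\cup s_\alpha N^{\mathfrak h}_w$; if $\alpha\notin N^{\mathfrak h}_v$, then $N^{\mathfrak h}_v=s_\alpha N^{\mathfrak h}_w$.
   Context: $\Phi$ is a crystallographic root system in a real Euclidean space with base $\Delta$, positive roots $\Phi^+$, $\Phi^-=-\Phi^+$, Weyl group $W$ with length $\ell$, and $s_\alpha$ the reflection through $\alpha$. Write $\alpha\prec\beta$ if $\beta-\alpha$ is a sum of positive roots. A Hessenberg set is a subset $\mathfrak h\subseteq\Phi^+$ whose complement in $\Phi^+$ is upward closed for $\prec$. For $w\in W$, $N^{\mathfrak h}_w=\{\beta\in\Phi^+: w^{-1}\beta\in-\mathfrak h\}$. We say $v$ is a cover of $w$ if $v=s_\alpha w$ for some $\alpha\in\Phi^+$ with $v^{-1}\alpha\in\Phi^-$ and $\ell(v)=\ell(w)+1$. *)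

From HB Require Import structures.
From mathcomp Require Import all_boot all_order all_algebra.
From mathcomp Require Import boolp classical_sets reals.
Set Implicit Arguments. Unset Strict Implicit. Unset Printing Implicit Defensive.
Import Order.TTheory GRing.Theory Num.Theory.
Local Open Scope ring_scope.
Local Open Scope classical_set_scope.

(* The real Euclidean space is R^n (column vectors 'cV[R]_n) with the standard
   inner product; Weyl group elements are n x n matrices acting on the left. *)
Section RootSystems.
Variables (R : realType) (n : nat).
Implicit Types (x a b g : 'cV[R]_n) (Phi Delta : seq 'cV[R]_n).

Definition dotv (x y : 'cV[R]_n) : R := (x^T *m y) 0 0.

(* reflection s_a : x |-> x - 2 (x,a)/(a,a) a *)
Definition sref (a : 'cV[R]_n) : 'M[R]_n :=
  1%:M - (2 / dotv a a) *: (a *m a^T).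

Definition is_root_system Phi : Prop :=
  [/\ (0 \notin Phi),
      (forall x : 'cV[R]_n, exists c : 'cV[R]_n -> R, x = \sum_(a <- Phi) c a *: a),
      (forall a (c : R), a \in Phi -> c *: a \in Phi -> c = 1 \/ c = -1),
      (forall a b, a \in Phi -> b \in Phi -> sref a *m b \in Phi) &
      (forall a b, a \in Phi -> b \in Phi ->
         exists z : int, 2 * dotv b a / dotv a a = z%:~R)].

Definition is_base Phi Delta : Prop :=
  [/\ uniq Delta, {subset Delta <= Phi},
      (forall c : 'cV[R]_n -> R, \sum_(d <- Delta) c d *: d = 0 ->
         forall d, d \in Delta -> c d = 0) &
      (forall b, b \in Phi -> exists c : 'cV[R]_n -> int,
         b = \sum_(d <- Delta) (c d)%:~R *: d /\
         ((forall d, d \in Delta -> (0 <= c d)%R) \/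
          (forall d, d \in Delta -> (c d <= 0)%R)))].

Definition posr Phi Delta b : Prop :=
  b \in Phi /\ exists c : 'cV[R]_n -> int,
    b = \sum_(d <- Delta) (c d)%:~R *: d /\ (forall d, d \in Delta -> (0 <= c d)%R).

Definition negr Phi Delta b : Prop := posr Phi Delta (- b).

Definition precr Phi Delta a b : Prop :=
  exists s : seq 'cV[R]_n, (forall x, x \in s -> posr Phi Delta x) /\
    b - a = \sum_(x <- s) x.

Definition hessenberg Phi Delta (h : set 'cV[R]_n) : Prop :=
  (forall x, h x -> posr Phi Delta x) /\
  (forall b g, posr Phi Delta b -> posr Phi Delta g -> ~ h b ->
     precr Phi Delta b g -> ~ h g).

Definition prod_refl (s : seq 'cV[R]_n) : 'M[R]_n :=
  foldr (fun a m => sref a *m m) 1%:M s.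

Definition weyl Phi (w : 'M[R]_n) : Prop :=
  exists s : seq 'cV[R]_n, {subset s <= Phi} /\ w = prod_refl s.

Definition length_is Delta (w : 'M[R]_n) (k : nat) : Prop :=
  (exists s : seq 'cV[R]_n, {subset s <= Delta} /\ size s = k /\ w = prod_refl s) /\
  (forall s : seq 'cV[R]_n, {subset s <= Delta} -> w = prod_refl s -> (k <= size s)%N).

Definition is_cover Phi Delta (w v : 'M[R]_n) a : Prop :=
  [/\ posr Phi Delta a, v = sref a *m w, negr Phi Delta (invmx v *m a) &
      exists k, length_is Delta w k /\ length_is Delta v k.+1].

Definition Nh Phi Delta (h : set 'cV[R]_n) (w : 'M[R]_n) : set 'cV[R]_n :=
  [set b | posr Phi Delta b /\ h (- (invmx w *m b))].

End RootSystems.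

From HB Require Import structures.
From mathcomp Require Import all_boot all_order all_algebra.
From mathcomp Require Import boolp classical_sets reals.
Import Order.TTheory GRing.Theory Num.Theory.
Local Open Scope ring_scope.
Local Open Scope classical_set_scope.

(* Since v^{-1} = w^{-1} s_a, we have v^{-1} b = w^{-1} (s_a b), so
   N^h_v \ {a} = s_a (N^h_w \ {a}) because the simple reflection s_a permutes
   Phi^+ \ {a}.  Finally a is not in N^h_w: the cover condition says that
   w^{-1} a = - v^{-1} a is positive, so - w^{-1} a is not in h. *)

Section Reflections.
Context {R : realType} {n : nat}.
Implicit Types (a x : 'cV[R]_n) (w : 'M[R]_n).

Lemma dotv_neq0 {a} : a != 0 -> dotv a a != 0.
Proof.
apply: contra_neq; rewrite /dotv mxE => sq0.
apply/matrixP => i j; rewrite ord1 mxE.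
have sq_ge0 k : 0 <= a^T 0 k * a k 0 by rewrite mxE -expr2 sqr_ge0.
have /eqP := psumr_eq0P (fun k _ => sq_ge0 k) sq0 (i := i) isT.
by rewrite mxE mulf_eq0 orbb => /eqP.
Qed.

Lemma sref_mulmx a x : sref a *m x = x - (2 * dotv a x / dotv a a) *: a.
Proof.
rewrite /sref mulmxBl mul1mx -scalemxAl -mulmxA [a^T *m x]mx11_scalar.
by rewrite mul_mx_scalar scalerA /dotv mulrAC.
Qed.

Lemma sref_root a : a != 0 -> sref a *m a = - a.
Proof.
move=> a0; rewrite sref_mulmx mulfK ?dotv_neq0 // scaler_nat mulr2n.
by rewrite opprD addrA subrr sub0r.
Qed.

Lemma sref_involutive {a} : a != 0 -> sref a *m sref a = 1%:M.
Proof.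
move=> a0; rewrite /sref mulmxBl mul1mx mulmxBr mulmx1 -!scalemxAl -!scalemxAr.
rewrite -mulmxA (mulmxA a^T) [a^T *m a]mx11_scalar -/(dotv a a).
rewrite mulmxA mul_mx_scalar -scalemxAl scalerA divfK ?dotv_neq0 //.
move: (2 / dotv a a) => c; rewrite scalerA mulrC -scalerA scaler_nat mulr2n.
by rewrite opprB addrK subrK.
Qed.

Lemma invmx_sref_mul a w : a != 0 -> w \in unitmx ->
  invmx (sref a *m w) = invmx w *m sref a.
Proof.
move=> a0 wu; have Swu : sref a *m w \in unitmx.
  by rewrite unitmx_mul wu andbT; case: (mulmx1_unit (sref_involutive a0)).
have inv_right : (sref a *m w) *m (invmx w *m sref a) = 1%:M.
  by rewrite -mulmxA (mulmxA w) mulmxV // mul1mx sref_involutive.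
by rewrite -[LHS]mulmx1 -inv_right mulmxA mulVmx ?mul1mx.
Qed.

End Reflections.

Section RootSystem.
Context {R : realType} {n : nat} {Phi Delta : seq 'cV[R]_n}.
Hypotheses (rsPhi : is_root_system Phi) (baseDelta : is_base Phi Delta).

Lemma root_neq0 b : b \in Phi -> b != 0.
Proof. by case: rsPhi => Phi_0 _ _ _ _ bP; apply: contraNneq Phi_0 => <-. Qed.

Lemma base_coef_unique (c e : 'cV[R]_n -> R) :
  \sum_(d <- Delta) c d *: d = \sum_(d <- Delta) e d *: d ->
  forall d, d \in Delta -> c d = e d.
Proof.
case: baseDelta => _ _ indep _ ce d dD.
have sum0 : \sum_(d <- Delta) (c d - e d) *: d = 0.
  by under eq_bigr do rewrite scalerBl; rewrite sumrB ce subrr.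
by apply/eqP; rewrite -subr_eq0 (indep _ sum0).
Qed.

Lemma posr_opp b : posr Phi Delta b -> ~ posr Phi Delta (- b).
Proof.
move=> [bP [c [eb c_ge0]]] [_ [c' [eb' c'_ge0]]].
have coef0 d : d \in Delta -> (c d + c' d)%:~R = 0 :> R.
  apply: (base_coef_unique (fun d => (c d + c' d)%:~R) (fun=> 0)).
  under eq_bigr do rewrite intrD scalerDl.
  by rewrite big_split /= -eb -eb' subrr big1 // => d' _; rewrite scale0r.
have c0 d : d \in Delta -> c d = 0.
  move=> dD; apply/eqP; rewrite eq_le c_ge0 // andbT.
  have /eqP := coef0 d dD; rewrite intr_eq0 => /eqP <-.
  by rewrite lerDl c'_ge0.
have b0 : b = 0 by rewrite eb big_seq big1 // => d dD; rewrite c0 // scale0r.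
by move: (root_neq0 b bP); rewrite b0 eqxx.
Qed.

(* s_a b = b - k a has the same coefficients as b away from a.  Being a root it
   is positive or negative; if it were negative, b would be a positive multiple
   of a, hence a itself since Phi is reduced. *)
Lemma sref_simple_posr a b : a \in Delta -> posr Phi Delta b -> b != a ->
  posr Phi Delta (sref a *m b).
Proof.
case: rsPhi => _ _ reduced refl _; case: (baseDelta) => uqD subD _ expand.
move=> aD [bP [c [eb c_ge0]]] ba; have aP := subD _ aD.
have [e [esb [e_ge0|e_le0]]] := expand _ (refl a b aP bP).
  by split; [exact: refl | exists e].
exfalso; set k := 2 * dotv a b / dotv a a.
have e_off_a d : d \in Delta -> d != a -> e d = c d.
  move=> dD da; apply: (@intr_inj R).
  pose c_sb d := (c d)%:~R - (if d == a then k else 0).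
  rewrite (base_coef_unique (fun d => (e d)%:~R) c_sb _ d dD) /c_sb ?(negbTE da) ?subr0 //.
  under [RHS]eq_bigr do rewrite scalerBl.
  rewrite sumrB -eb -esb sref_mulmx (bigD1_seq a) //= eqxx big1 ?addr0 //.
  by move=> d' /negbTE ->; rewrite scale0r.
have c_off_a d : d \in Delta -> d != a -> c d = 0.
  by move=> dD da; apply/eqP; rewrite eq_le c_ge0 // andbT -e_off_a ?e_le0.
have eb_a : b = (c a)%:~R *: a.
  rewrite eb (bigD1_seq a) //= big1_seq ?addr0 // => d /andP[da dD].
  by rewrite c_off_a // scale0r.
have := reduced a (c a)%:~R aP; rewrite -eb_a => /(_ bP) [ca1|caN1].
  by move: ba; rewrite eb_a ca1 scale1r eqxx.
by have := c_ge0 a aD; rewrite -(ler0z R) caN1 ler0N1.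
Qed.

Lemma weyl_unitmx {w} : weyl Phi w -> w \in unitmx.
Proof.
move=> [s [sPhi ->]]; elim: s sPhi => [|b s IHs] sPhi /=; first exact: unitmx1.
have b0 : b != 0 by apply/root_neq0/sPhi; rewrite mem_head.
rewrite unitmx_mul IHs ?andbT => [|x xs]; last by apply: sPhi; rewrite inE xs orbT.
by case: (mulmx1_unit (sref_involutive b0)).
Qed.

Lemma simple_posr a : a \in Delta -> posr Phi Delta a.
Proof.
case: baseDelta => uqD subD _ _ aD; split; first exact: subD.
exists (fun d => (d == a)%:Z); split=> [|d _]; last by case: (d == a).
rewrite (bigD1_seq a) //= eqxx scale1r big1 ?addr0 // => d /negbTE ->.
by rewrite scale0r.
Qed.

Lemma Nh_sref_simpleD1 h {a w} : a \in Delta -> w \in unitmx ->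
  Nh Phi Delta h (sref a *m w) `\ a = mulmx (sref a) @` (Nh Phi Delta h w `\ a).
Proof.
move=> aD wu; have a0 := root_neq0 a (proj1 (simple_posr _ aD)).
have srefK x : sref a *m (sref a *m x) = x.
  by rewrite mulmxA sref_involutive ?mul1mx.
have invmx_mul x : invmx (sref a *m w) *m x = invmx w *m (sref a *m x).
  by rewrite invmx_sref_mul ?mulmxA.
have sref_neq_a x : posr Phi Delta x -> sref a *m x <> a.
  move=> xP /(congr1 (mulmx (sref a))); rewrite srefK sref_root // => xNa.
  by apply: posr_opp (simple_posr _ aD) _; rewrite -xNa.
apply/seteqP; split=> [x [[xP hx] /eqP xa] | _ [y [[yP hy] /eqP ya] <-]].
- exists (sref a *m x); last exact: srefK.
  split; [split; [exact: sref_simple_posr | by rewrite -invmx_mul] | exact: sref_neq_a].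
- split; [split; [exact: sref_simple_posr | by rewrite invmx_mul srefK] | exact: sref_neq_a].
Qed.

Lemma cover_notin_Nh {h w v a} : hessenberg Phi Delta h -> weyl Phi w ->
  is_cover Phi Delta w v a -> ~ Nh Phi Delta h w a.
Proof.
move=> [h_pos _] wW [aP -> vNeg _] [_ /h_pos]; apply: posr_opp.
have a0 := root_neq0 a (proj1 aP).
move: vNeg; rewrite /negr invmx_sref_mul ?weyl_unitmx //.
by rewrite -mulmxA sref_root // mulmxN opprK.
Qed.

End RootSystem.

Theorem corollary2p10 (R : realType) (n : nat)
  (Phi Delta : seq 'cV[R]_n) (h : set 'cV[R]_n) (w v : 'M[R]_n) (a : 'cV[R]_n) :
  is_root_system Phi -> is_base Phi Delta -> hessenberg Phi Delta h ->
  weyl Phi w -> weyl Phi v -> is_cover Phi Delta w v a -> a \in Delta ->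
  (Nh Phi Delta h v a ->
     Nh Phi Delta h v = [set a] `|` (mulmx (sref a)) @` Nh Phi Delta h w) /\
  (~ Nh Phi Delta h v a ->
     Nh Phi Delta h v = (mulmx (sref a)) @` Nh Phi Delta h w).
Proof.
move=> rsPhi baseDelta hess wW _ cover aD.
have aNw := cover_notin_Nh rsPhi baseDelta hess wW cover.
have NvD1 := Nh_sref_simpleD1 rsPhi baseDelta h aD (weyl_unitmx rsPhi wW).
case: cover => _ vE _ _; rewrite -vE (not_setD1 aNw) in NvD1.
split=> [aNv | aNv]; first by rewrite -(setD1K aNv) NvD1.
by rewrite -(not_setD1 aNv) NvD1.
Qed.
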